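(* For every hereditary class property $\Pi$, we have $(\Pi^+)^+=\Pi^+$ and $(\Pi^\ast)^+=\Pi^\ast$.
   Context: Graphs are finite and simple. A hereditary class is a class closed under isomorphism and induced subgraphs; a hereditary class property is a set $\Pi$ of hereditary classes such that $\mathscr C\in\Pi$, $\mathscr D$ hereditary, $\mathscr D\subseteq\mathscr C$ imply $\mathscr D\in\Pi$. For non-decreasing $f:\mathbb N\to\mathbb N$ and positive integer $p$, $\mathscr C$ has an $f$-bounded $\Pi$-decomposition with parameter $p$ if there is $\mathscr D_p\in\Pi$ such that every $G\in\mathscr C$ has a partition $V_1,\dots,V_N$ of $V(G)$ with $N\le f(|G|)$ and $G[V_{i_1}\cup\dots\cup V_{i_p}]\in\mathscr D_p$ for all $i_1,\dots,i_p\in[N]$. $\Pi^+$ (resp. $\Pi^\ast$) is the set of hereditary classes that, for every positive integer $p$, have an $f$-bounded $\Pi$-decomposition with parameter $p$ for some constant function $f$ (resp. some non-decreasing $f$ with $f(n)=n^{o(1)}$). *)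

From Stdlib Require Import Reals.
From mathcomp Require Import all_boot.

Set Implicit Arguments.
Unset Strict Implicit.
Unset Printing Implicit Defensive.

Record graph := Graph {
  gsize : nat;
  gadj : rel 'I_gsize;
  gsym : symmetric gadj;
  girr : irreflexive gadj }.

Definition giso (G H : graph) : Prop :=
  exists f : 'I_(gsize G) -> 'I_(gsize H),
    bijective f /\ forall x y, @gadj H (f x) (f y) = @gadj G x y.

Definition induced_adj (G : graph) (S : {set 'I_(gsize G)}) : rel 'I_#|S| :=
  fun i j => @gadj G (enum_val i) (enum_val j).

Lemma induced_sym (G : graph) (S : {set 'I_(gsize G)}) :
  symmetric (@induced_adj G S).
Proof. by move=> i j; rewrite /induced_adj gsym. Qed.

Lemma induced_irr (G : graph) (S : {set 'I_(gsize G)}) :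
  irreflexive (@induced_adj G S).
Proof. by move=> i; rewrite /induced_adj girr. Qed.

Definition induced (G : graph) (S : {set 'I_(gsize G)}) : graph :=
  @Graph #|S| (@induced_adj G S) (@induced_sym G S) (@induced_irr G S).

Definition gclass := graph -> Prop.

Definition hereditary (C : gclass) : Prop :=
  (forall G H, giso G H -> C G -> C H) /\
  (forall G (S : {set 'I_(gsize G)}), C G -> C (@induced G S)).

Definition subclass (D C : gclass) : Prop := forall G, D G -> C G.

Definition class_prop := gclass -> Prop.

Definition hereditary_property (P : class_prop) : Prop :=
  (forall C, P C -> hereditary C) /\
  (forall C D, P C -> hereditary D -> subclass D C -> P D).

(* f-bounded P-decomposition with parameter p.  A partition V_1..V_N of V(G)
   is given by the map c sending a vertex to the index of its part. *)
Definition has_decomp (P : class_prop) (C : gclass) (f : nat -> nat) (p : nat) : Prop :=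
  exists Dp : gclass, P Dp /\
    forall G, C G ->
      exists (N : nat) (c : 'I_(gsize G) -> 'I_N),
        N <= f (gsize G) /\
        forall ix : 'I_p -> 'I_N,
          Dp (@induced G [set v | [exists k, c v == ix k]]).

Definition nondecr (f : nat -> nat) : Prop := forall m n, m <= n -> f m <= f n.

(* f(n) = n^{o(1)}: for every eps > 0, eventually f(n) <= n^eps. *)
Definition subpoly (f : nat -> nat) : Prop :=
  forall eps : R, Rlt 0 eps ->
    exists n0 : nat, forall n, n0 <= n -> Rle (INR (f n)) (Rpower (INR n) eps).

Definition plus_prop (P : class_prop) : class_prop := fun C =>
  hereditary C /\
  forall p, 0 < p -> exists K : nat, has_decomp P C (fun _ => K) p.

Definition star_prop (P : class_prop) : class_prop := fun C =>
  hereditary C /\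
  forall p, 0 < p -> exists f, nondecr f /\ subpoly f /\ has_decomp P C f p.

(* Decompositions compose.  Let each G in C be partitioned into N <= K parts
   such that the union U_ix of any p parts ix induces a graph of D, and let each
   graph of D be partitioned into at most B parts such that any p of them induce
   a graph of E.  Label each vertex v of G by its part c v together with, for
   each of the N^p choices ix, its part in the partition of G[U_ix].  The first
   components of any p labels determine a choice ix, and the vertices carrying
   these labels lie in a union of p parts of G[U_ix]; since E is hereditary they
   induce a graph of E.  This uses at most K (B+1)^(K^p) parts: a constant when
   B is one, and n^o(1) when B = f(n) with f(n) = n^o(1).  The converse
   inclusions are trivial, decomposing a class by itself with a single part. *)

From Stdlib Require Import Reals Lra.
From mathcomp Require Import all_boot.

Set Implicit Arguments.
Unset Strict Implicit.
Unset Printing Implicit Defensive.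

Definition union_parts n N (c : 'I_n -> 'I_N) p (ix : 'I_p -> 'I_N) : {set 'I_n} :=
  [set v | [exists k, c v == ix k]].

Definition decomposes (E : gclass) (G : graph) N (c : 'I_(gsize G) -> 'I_N) p :=
  forall ix : 'I_p -> 'I_N, E (@induced G (union_parts c ix)).

Definition splits (E : gclass) (G : graph) (A : {set 'I_(gsize G)}) N
    (c : 'I_(gsize G) -> 'I_N) p :=
  forall ix : 'I_p -> 'I_N, E (@induced G (A :&: union_parts c ix)).

Definition decomposable_into (D C : gclass) (f : nat -> nat) p :=
  forall G, C G -> exists N (c : 'I_(gsize G) -> 'I_N),
    N <= f (gsize G) /\ decomposes D c p.

Lemma giso_size0 G H : gsize G = 0 -> gsize H = 0 -> giso G H.
Proof.
move=> G0 H0.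
have emptyG (x : 'I_(gsize G)) : False by case: x => m; rewrite G0 ltn0.
have emptyH (y : 'I_(gsize H)) : False by case: y => m; rewrite H0 ltn0.
exists (fun x => match emptyG x with end); split=> [|x]; last by case: (emptyG x).
by exists (fun y => match emptyH y with end) => [x|y]; [case: (emptyG x)|case: (emptyH y)].
Qed.

Lemma induced_subset_giso G (A B : {set 'I_(gsize G)}) : B \subset A ->
  giso (@induced (@induced G A) [set w | enum_val w \in B]) (@induced G B).
Proof.
move=> sBA; set BA := [set w | _].
have inB (i : 'I_#|BA|) : enum_val (enum_val i) \in B.
  by have := enum_valP i; rewrite inE.
have inA (j : 'I_#|B|) : enum_val j \in A := subsetP sBA _ (enum_valP j).
have inBA (j : 'I_#|B|) : enum_rank_in (inA j) (enum_val j) \in BA.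
  by rewrite inE enum_rankK_in ?inA ?enum_valP.
pose f i := enum_rank_in (inB i) (enum_val (enum_val i)).
pose g j := enum_rank_in (inBA j) (enum_rank_in (inA j) (enum_val j)).
have fE i : enum_val (f i) = enum_val (enum_val i) by rewrite enum_rankK_in ?inB.
have gE j : enum_val (enum_val (g j)) = enum_val j.
  by rewrite enum_rankK_in ?inBA // enum_rankK_in ?inA.
exists f; split=> [|x y]; last by rewrite /= /induced_adj /= /induced_adj !fE.
by exists g => [i|j]; apply: enum_val_inj;
  [apply: enum_val_inj; rewrite gE fE|rewrite fE gE].
Qed.

Section Refinement.
Variable E : gclass.
Hypothesis hE : hereditary E.

Lemma hereditary_size0 G H : E G -> gsize H = 0 -> E H.
Proof.
move=> EG H0; apply: hE.1 (hE.2 G set0 EG).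
by apply: giso_size0 => //=; rewrite cards0.
Qed.

Lemma hereditary_subset G (A B : {set 'I_(gsize G)}) :
  B \subset A -> E (@induced G A) -> E (@induced G B).
Proof. by move=> sBA EA; apply: hE.1 (induced_subset_giso sBA) (hE.2 _ _ EA). Qed.

Lemma hereditary_induced_induced G (A B : {set 'I_(gsize G)}) (X : {set 'I_#|A|}) :
  B \subset A -> [set w | enum_val w \in B] \subset X ->
  E (@induced (@induced G A) X) -> E (@induced G B).
Proof.
move=> sBA sBX EX; apply: hE.1 (induced_subset_giso sBA) _.
exact: hereditary_subset EX.
Qed.

(* The codomain is ['I_B.+1] so that it is inhabited even when [A] is empty
   and [B = 0]. *)
Lemma decomposes_lift G (A : {set 'I_(gsize G)}) N B
    (c : 'I_(gsize (@induced G A)) -> 'I_N) p :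
  (forall H, gsize H = 0 -> E H) -> N <= B -> decomposes E c p ->
  exists lam : 'I_(gsize G) -> 'I_B.+1, splits E A lam p.
Proof.
move=> E0 leNB decA; have leNB1 : N <= B.+1 := leqW leNB.
pose lam v := if [pick w | enum_val w == v] is Some w then widen_ord leNB1 (c w) else ord0.
have lamE w : lam (enum_val w) = widen_ord leNB1 (c w).
  by rewrite /lam; case: pickP => [w' /eqP/enum_val_inj -> | /(_ w)]; rewrite ?eqxx.
exists lam => ix; set S := _ :&: _.
have [-> | [v vS]] := set_0Vmem S; first by apply: E0; rewrite /= cards0.
have sSA : S \subset A := subsetIl _ _.
pose ix' k := insubd (c (enum_rank_in (subsetP sSA _ vS) v)) (val (ix k)).
apply: (hereditary_induced_induced sSA _ (decA ix')).
apply/subsetP => w; rewrite !inE => /andP [_ /existsP [k /eqP wk]].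
apply/existsP; exists k; apply/eqP/val_inj.
by rewrite /ix' -wk lamE /= insubdK // -topredE /= ltn_ord.
Qed.

Lemma decomposes_product G N B p (c : 'I_(gsize G) -> 'I_N)
    (lam : {ffun 'I_p -> 'I_N} -> 'I_(gsize G) -> 'I_B) :
  (forall ix : {ffun 'I_p -> 'I_N}, splits E (union_parts c ix) (lam ix) p) ->
  decomposes E (fun v => enum_rank (c v, [ffun ix => lam ix v])) p.
Proof.
move=> split_lam jx; pose jl k := enum_val (jx k).
pose ix := [ffun k => (jl k).1].
apply: hereditary_subset (split_lam ix (fun k => (jl k).2 ix)).
apply/subsetP => v; rewrite !inE => /existsP [k /eqP vk].
have labv : (c v, [ffun ix => lam ix v]) = jl k by rewrite /jl -vk enum_rankK.
by apply/andP; split; apply/existsP; exists k; rewrite ?ffunE -labv ?ffunE.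
Qed.

Lemma decomposes_refine G N B p (c : 'I_(gsize G) -> 'I_N) : 0 < p ->
  (forall ix : 'I_p -> 'I_N,
     exists N' (c' : 'I_(gsize (@induced G (union_parts c ix))) -> 'I_N'),
       N' <= B /\ decomposes E c' p) ->
  exists N2 (c2 : 'I_(gsize G) -> 'I_N2),
    N2 <= N * B.+1 ^ (N ^ p) /\ decomposes E c2 p.
Proof.
move=> p_gt0 decU; have [G0 | G_gt0] := posnP (gsize G).
  by exists 0, (cast_ord G0); split=> // ix; case: (ix (Ordinal p_gt0)).
have E0 H : gsize H = 0 -> E H.
  pose v0 := Ordinal G_gt0; pose ix0 (k : 'I_p) := c v0.
  have v0U : v0 \in union_parts c ix0 by rewrite inE; apply/existsP; exists (Ordinal p_gt0).
  have [N' [c' [_ dec0]]] := decU ix0.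
  exact: hereditary_size0 (dec0 (fun _ => c' (enum_rank_in v0U v0))).
have : forall ix : {ffun 'I_p -> 'I_N},
    exists lam : 'I_(gsize G) -> 'I_B.+1, splits E (union_parts c ix) lam p.
  by move=> ix; have [N' [c' [leNB decix]]] := decU ix; apply: decomposes_lift decix.
case/fin_all_exists => lam split_lam.
exists #|{: 'I_N * {ffun {ffun 'I_p -> 'I_N} -> 'I_B.+1}}|.
exists (fun v => enum_rank (c v, [ffun ix => lam ix v])).
split; first by rewrite card_prod !card_ffun !card_ord.
exact: decomposes_product.
Qed.

End Refinement.

Lemma decomposable_into_trans (E D C : gclass) K f p :
  hereditary E -> nondecr f -> 0 < p ->
  decomposable_into D C (fun _ => K) p -> decomposable_into E D f p ->
  decomposable_into E C (fun n => K * (f n).+1 ^ (K ^ p)) p.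
Proof.
move=> hE f_mono p_gt0 decC decD G CG.
have [N [c [leNK decG]]] := decC G CG.
have [|N2 [c2 [leN2 decG2]]] := decomposes_refine hE (B := f (gsize G)) p_gt0 (c := c) _.
  move=> ix; have [N' [c' [leN' dec']]] := decD _ (decG ix).
  exists N', c'; split=> //; apply: leq_trans leN' (f_mono _ _ _).
  by rewrite /= -[X in _ <= X]card_ord max_card.
exists N2, c2; split=> //; apply: leq_trans leN2 _.
by rewrite leq_mul // leq_pexp2l // leq_exp2r.
Qed.

Lemma nondecr_mul_expn_succ f K M : nondecr f -> nondecr (fun n => K * (f n).+1 ^ M).
Proof.
move=> f_mono m n le_mn; rewrite leq_mul //.
by case: M => // M; rewrite leq_exp2r // ltnS f_mono.
Qed.

Section SubPolynomial.
Local Open Scope R_scope.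

Lemma Rpower_eventually_ge (C eps : R) : 0 < eps ->
  exists n0 : nat, forall n, (n0 <= n)%N -> C <= Rpower (INR n) eps.
Proof.
move=> eps_gt0; pose y := Rpower (Rabs C + 1) (/ eps).
have [n0 n0y] := INR_archimed 1 y Rlt_0_1.
exists n0 => n le_n0n.
have y_gt0 : 0 < y := exp_pos _.
have le_yn : y <= INR n.
  by have := le_INR _ _ (elimT leP le_n0n); lra.
apply: Rle_trans (_ : Rpower y eps <= _); last by apply: Rle_Rpower_l; lra.
rewrite /y Rpower_mult Rinv_l; last lra.
by rewrite Rpower_1; have := Rle_abs C; have := Rabs_pos C; lra.
Qed.

Lemma subpoly_const K : subpoly (fun _ => K).
Proof. by move=> eps; apply: Rpower_eventually_ge. Qed.

Lemma subpoly_mul f g : subpoly f -> subpoly g -> subpoly (fun n => f n * g n)%N.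
Proof.
move=> hf hg eps eps_gt0.
have [n1 hn1] := hf (eps / 2) ltac:(lra); have [n2 hn2] := hg (eps / 2) ltac:(lra).
exists (maxn n1 n2) => n; rewrite geq_max => /andP [le1 le2].
rewrite mult_INR (_ : eps = eps / 2 + eps / 2); last field.
by rewrite Rpower_plus; apply: Rmult_le_compat; auto using pos_INR.
Qed.

Lemma subpoly_add f g : subpoly f -> subpoly g -> subpoly (fun n => f n + g n)%N.
Proof.
move=> hf hg eps eps_gt0.
have [n1 hn1] := hf (eps / 2) ltac:(lra); have [n2 hn2] := hg (eps / 2) ltac:(lra).
have [n3 hn3] := @Rpower_eventually_ge 2 (eps / 2) ltac:(lra).
exists (maxn n1 (maxn n2 n3)) => n; rewrite !geq_max => /and3P [le1 le2 le3].
rewrite plus_INR (_ : eps = eps / 2 + eps / 2); last field.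
(* f n + g n <= 2 n^(eps/2) <= n^(eps/2) n^(eps/2) *)
rewrite Rpower_plus; move: (hn1 n le1) (hn2 n le2) (hn3 n le3).
by have := exp_pos (eps / 2 * ln (INR n)); rewrite /Rpower; nra.
Qed.

Lemma subpoly_expn f M : subpoly f -> subpoly (fun n => f n ^ M)%N.
Proof.
move=> hf; elim: M => [|M IH]; first exact: subpoly_const.
move=> eps eps_gt0; have [n0 hn0] := subpoly_mul hf IH eps_gt0.
by exists n0 => n /hn0; rewrite expnS.
Qed.

Lemma subpoly_mul_expn_succ f K M : subpoly f -> subpoly (fun n => K * (f n).+1 ^ M)%N.
Proof.
move=> hf; apply: subpoly_mul (subpoly_const K) (subpoly_expn M _).
exact: subpoly_add (subpoly_const 1) hf.
Qed.

End SubPolynomial.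

Lemma plus_prop_self (Q : class_prop) C : hereditary C -> Q C -> plus_prop Q C.
Proof.
move=> hC QC; split=> // p _; exists 1, C; split=> // G CG.
by exists 1, (fun _ => ord0); split=> // ix; apply: hC.2.
Qed.

Theorem mainTheorem8 (P : class_prop) :
  hereditary_property P ->
  (forall C : gclass, plus_prop (plus_prop P) C <-> plus_prop P C) /\
  (forall C : gclass, plus_prop (star_prop P) C <-> star_prop P C).
Proof.
move=> [P_her _]; split=> C; split.
- case=> C_her decC; split=> // p p_gt0.
  have [K [D [[_ decD] CD]]] := decC p p_gt0.
  have [K' [E [PE DE]]] := decD p p_gt0.
  exists (K * K'.+1 ^ (K ^ p)), E; split=> //.
  exact: decomposable_into_trans (P_her _ PE) _ p_gt0 CD DE.
- by move=> CP; apply: plus_prop_self CP.1 CP.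
- case=> C_her decC; split=> // p p_gt0.
  have [K [D [[_ decD] CD]]] := decC p p_gt0.
  have [f [f_mono [f_sub [E [PE DE]]]]] := decD p p_gt0.
  exists (fun n => K * (f n).+1 ^ (K ^ p)).
  split; first exact: nondecr_mul_expn_succ.
  split; first exact: subpoly_mul_expn_succ.
  exists E; split=> //.
  exact: decomposable_into_trans (P_her _ PE) f_mono p_gt0 CD DE.
- by move=> CP; apply: plus_prop_self CP.1 CP.
Qed.
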